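(* Let $m_1,m_2$ be positive integers and let $n$ be an even integer with $m_2 \geq n \geq \lceil \log m_1 \rceil+\lceil \log m_2 \rceil+1$. Then $BR(C_{n},K_{m_1,m_2})\leq 32m_1+49m_2$.
   Context: $C_n$ is the cycle on $n$ vertices and $K_{a,b}$ the complete bipartite graph with parts of sizes $a$ and $b$. For bipartite graphs $G_1,\ldots,G_k$, the bipartite Ramsey number $BR(G_1,\ldots,G_k)$ is the smallest integer $b$ such that for every coloring of the edges of $K_{b,b}$ with colors $1,\ldots,k$ there is, for some $i$, a copy of $G_i$ all of whose edges have color $i$. $\log$ denotes the logarithm to base $2$. *)

From mathcomp Require Import all_boot.
Set Implicit Arguments. Unset Strict Implicit. Unset Printing Implicit Defensive.

Definition KV (b : nat) := ('I_b + 'I_b)%type.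

(* A 2-colouring of the edges of K_{b,b}: edge {inl i, inr j} gets colour
   c i j; true = colour 1, false = colour 2. *)
Definition coloring (b : nat) := 'I_b -> 'I_b -> bool.

Definition adj_col (b : nat) (c : coloring b) (col : bool) (u v : KV b) : bool :=
  match u, v with
  | inl i, inr j => c i j == col
  | inr j, inl i => c i j == col
  | _, _ => false
  end.

Definition has_mono_cycle (n b : nat) (c : coloring b) (col : bool) : Prop :=
  exists f : 'I_n -> KV b,
    injective f /\ forall i : 'I_n, adj_col c col (f i) (f (ordS i)).

Definition has_mono_Kab (m1 m2 b : nat) (c : coloring b) (col : bool) : Prop :=
  exists (f : 'I_m1 -> KV b) (g : 'I_m2 -> KV b),
    [/\ injective f, injective g,
        (forall i j, f i != g j) &
        (forall i j, adj_col c col (f i) (g j))].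

Definition BR_holds (n m1 m2 b : nat) : Prop :=
  forall c : coloring b, has_mono_cycle n c true \/ has_mono_Kab m1 m2 c false.

(* BR(C_n, K_{m1,m2}) <= N : the least b with BR_holds is at most N,
   i.e. some b <= N satisfies BR_holds. *)
Definition BR_le (n m1 m2 N : nat) : Prop :=
  exists b, b <= N /\ BR_holds n m1 m2 b.

(* Suppose there is no blue K_{m1,m2} and let M = max(m1, m2); then every two
   vertex sets of size at least M on opposite sides span a red edge.  Reserve a
   set W of 4M vertices on each side.  Deleting from the other vertices a
   largest "sparse" set Z (at most 8|Z| red neighbours) together with its
   neighbourhood leaves a set K in which every set X of fewer than M vertices
   has more than 8|X| red neighbours.  Most vertices of W have at least 8 red
   neighbours in K, and a depth-first search among them finds a red path with
   n - 1 - ceil(log m1) - ceil(log m2) edges.  From its two ends grow disjoint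
   red binary trees inside K, doubling each layer, of depths ceil(log m1) and
   ceil(log m2): expansion always leaves room for the next layer.  As n is even
   the two last layers lie on opposite sides and have at least m1 and m2
   vertices, so a red edge between them closes a red C_n. *)

From mathcomp Require Import all_boot zify.
From Stdlib Require Import Classical.

Set Implicit Arguments. Unset Strict Implicit. Unset Printing Implicit Defensive.

(* The same cardinal #|A| can occur with different (convertible) type
   annotations, which lia would treat as distinct atoms. *)
Ltac card_lia :=
  repeat match goal with
  | H : is_true (_ <= _) |- _ => revert H
  | H : @eq nat _ _ |- _ => revert H
  end;
  repeat match goal with
  | |- context [ #|?A| ] => let n := fresh "n" in set n := #|A|; clearbody n
  end;
  intros; lia.

Section FinsetCounting.
Variable T : finType.
Implicit Types A B C W : {set T}.

Lemma exists_subset_card A k : k <= #|A| -> exists2 B : {set T}, B \subset A & #|B| = k.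
Proof.
case/card_geqP=> s [s_uniq s_size sA]; exists [set x in s].
  by apply/subsetP=> x; rewrite inE; apply: sA.
by rewrite cardsE (card_uniqP s_uniq).
Qed.

Lemma exists_subset_card_disjoint A W k : k + #|W| <= #|A| ->
  exists B : {set T}, [/\ B \subset A, #|B| = k & [disjoint B & W]].
Proof.
move=> hk; have : k <= #|A :\: W|.
  by have := cardsID W A; have := subset_leq_card (subsetIr A W); lia.
case/exists_subset_card=> B sB cB; exists B; split=> //.
  exact: subset_trans sB (subsetDl _ _).
rewrite disjoint_subset; apply: subset_trans sB _.
by apply/subsetP=> x; rewrite !inE => /andP[].
Qed.

Lemma leq_card_subsetU A B C : A \subset B :|: C -> #|A| <= #|B| + #|C|.
Proof. by move/subset_leq_card/leq_trans; apply; apply: leq_card_setU. Qed.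

End FinsetCounting.

Lemma up_log2_lt_double m : 0 < m -> 2 ^ up_log 2 m < 2 * m.
Proof.
move=> m_gt0; have [m_le1|m_gt1] := leqP m 1.
  have /eqP -> : up_log 2 m == 0 by rewrite up_log_eq0 m_le1 orbT.
  by rewrite expn0; lia.
have : 0 < up_log 2 m by rewrite up_log_gt0 m_gt1.
move: (up_log_gtn (isT : 1 < 2) m_gt1).
by case: (up_log 2 m) => // d; rewrite expnS /=; lia.
Qed.

Section Coloring.
Variables (b : nat) (c : coloring b).
Local Notation V := ('I_b + 'I_b)%type.
Implicit Types (A C D K S T U W X Y Z : {set V}) (u v r x y : V) (p : seq V).

Definition red u v := adj_col c true u v.

Lemma red_sym u v : red u v = red v u.
Proof. by case: u => ?; case: v => ?. Qed.

Definition is_left v := if v is inl _ then true else false.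

Lemma red_is_left u v : red u v -> is_left v = ~~ is_left u.
Proof. by case: u => ?; case: v => ?. Qed.

Lemma adj_col_false u v :
  is_left v = ~~ is_left u -> adj_col c false u v = ~~ red u v.
Proof. by case: u => i; case: v => j //= _; rewrite /red /=; case: (c _ _). Qed.

Definition side (s : bool) : {set V} := [set v | is_left v == s].

Lemma setC_side s : ~: side s = side (~~ s).
Proof. by apply/setP=> v; rewrite !inE; case: (is_left v); case: s. Qed.

Lemma card_side s : #|side s| = b.
Proof.
have cardL : #|side true| = b.
  have -> : side true = inl @: [set: 'I_b].
    apply/setP=> -[i|i]; rewrite !inE /=.
    - by apply/esym/imsetP; exists i; rewrite ?inE.
    - by apply/esym/imsetP=> -[j].
  by rewrite card_imset ?cardsT ?card_ord //; apply: inl_inj.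
case: s => //; have := cardsC (side true).
by rewrite setC_side cardL card_sum !card_ord /=; lia.
Qed.

Lemma exists_balanced k : k <= b -> exists W, forall s, #|W :&: side s| = k.
Proof.
move=> le_kb; have room s : k <= #|side s| by rewrite card_side.
have [A /subsetP sA cardA] := exists_subset_card (room true).
have [B /subsetP sB cardB] := exists_subset_card (room false).
exists (A :|: B) => s; suff -> : (A :|: B) :&: side s = if s then A else B.
  by case: s.
apply/setP=> v; move: (sA v) (sB v); rewrite !inE => /implyP + /implyP.
by case: s; case: (v \in A); case: (v \in B); case: is_left.
Qed.

Definition opposite X Y := exists s, X \subset side s /\ Y \subset side (~~ s).

Lemma opposite_is_left X Y x y :
  opposite X Y -> x \in X -> y \in Y -> is_left y = ~~ is_left x.
Proof.
by case=> s [/subsetP sX /subsetP sY] /sX + /sY; rewrite !inE => /eqP -> /eqP ->.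
Qed.

Lemma mono_Kab_of_red_free m1 m2 X Y : opposite X Y ->
  m1 <= #|X| -> m2 <= #|Y| -> (forall x y, x \in X -> y \in Y -> ~~ red x y) ->
  has_mono_Kab m1 m2 c false.
Proof.
move=> XY h1 h2 free.
exists (fun i => enum_val (widen_ord h1 i)), (fun j => enum_val (widen_ord h2 j)).
have sides i j :=
  opposite_is_left XY (enum_valP (widen_ord h1 i)) (enum_valP (widen_ord h2 j)).
split.
- by move=> i j /enum_val_inj/(congr1 val) e; apply: val_inj.
- by move=> i j /enum_val_inj/(congr1 val) e; apply: val_inj.
- by move=> i j; apply/eqP=> e; move: (sides i j); rewrite e; case: is_left.
- by move=> i j; rewrite adj_col_false ?sides //; apply: free; apply: enum_valP.
Qed.

Definition nbhd X : {set V} := [set v | [exists u in X, red u v]].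

Lemma nbhdP X v : reflect (exists2 u, u \in X & red u v) (v \in nbhd X).
Proof.
rewrite inE; apply: (iffP existsP) => [[u /andP[]]|[u uX r]]; first by exists u.
by exists u; rewrite uX.
Qed.

Lemma nbhdS X Y : X \subset Y -> nbhd X \subset nbhd Y.
Proof.
move=> /subsetP sXY; apply/subsetP=> v /nbhdP[u /sXY uY r].
by apply/nbhdP; exists u.
Qed.

Lemma nbhdU X Y : nbhd (X :|: Y) = nbhd X :|: nbhd Y.
Proof.
apply/setP=> v; rewrite in_setU; apply/nbhdP/orP => [[u]|[] /nbhdP[u uX r]].
- by rewrite inE => /orP[] uX r; [left|right]; apply/nbhdP; exists u.
- by exists u; rewrite // inE uX.
- by exists u; rewrite // inE uX orbT.
Qed.

Lemma nbhd0 : nbhd set0 = set0.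
Proof. by apply/setP=> v; rewrite in_set0; apply/nbhdP=> -[u]; rewrite inE. Qed.

Lemma card_nbhd_le F X t : (forall v, v \in X -> #|nbhd [set v] :&: F| <= t) ->
  #|nbhd X :&: F| <= t * #|X|.
Proof.
have [n] := ubnP #|X|; elim: n X => // n IH X /ltnSE cardX deg.
have [->|[v vX]] := set_0Vmem X; first by rewrite nbhd0 set0I cards0.
rewrite -{1}(setD1K vX) nbhdU setIUl (cardsD1 v X) vX mulnSr addnC.
apply: leq_trans (leq_card_setU _ _) (leq_add (deg _ vX) (IH _ _ _)).
  by move: cardX; rewrite (cardsD1 v X) vX.
by move=> u; rewrite inE => /andP[_]; apply: deg.
Qed.

Definition layered (B : nat -> {set V}) :=
  forall j v, v \in B j.+1 -> exists2 u, u \in B j & red u v.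

Lemma layered_walk B j v : layered B -> v \in B j ->
  exists f : nat -> V, [/\ f j = v, forall i, i <= j -> f i \in B i &
                          forall i, i < j -> red (f i) (f i.+1)].
Proof.
move=> lay; elim: j v => [|j IH] v vB.
  by exists (fun _ => v); split=> // i; rewrite leqn0 => /eqP ->.
have [u uB uv] := lay j v vB; have [f [fj fB fr]] := IH u uB.
exists (fun i => if i == j.+1 then v else f i); split=> [|i|i lt_ij].
- by rewrite eqxx.
- by case: eqVneq => [-> //|ne] le_ij; apply: fB; lia.
- rewrite ifN_eq ?(ltn_eqF lt_ij) //; case: eqVneq => [[ij]|ne].
    by rewrite ij fj.
  by apply: fr; lia.
Qed.

Lemma layered_is_left B x j v : B 0 = [set x] -> layered B -> v \in B j ->
  is_left v = is_left x (+) odd j.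
Proof.
move=> B0 lay; elim: j v => [|j IH] v vB.
  by move: vB; rewrite B0 inE addbF => /eqP ->.
have [u uB uv] := lay j v vB.
by rewrite (red_is_left uv) (IH u uB) /=; case: is_left; case: odd.
Qed.

Lemma layers_opposite B B' x i j : B 0 = [set x] -> B' 0 = [set x] ->
  layered B -> layered B' -> odd j = ~~ odd i -> opposite (B i) (B' j).
Proof.
move=> B0 B'0 lay lay' ij; exists (is_left x (+) odd i).
split; apply/subsetP=> v vB; rewrite inE.
  by rewrite (layered_is_left B0 lay vB).
by rewrite (layered_is_left B'0 lay' vB) ij; case: is_left; case: odd.
Qed.

Lemma disjoint_layers_eq (B : nat -> {set V}) i j v :
  (forall i j, i != j -> [disjoint B i & B j]) -> v \in B i -> v \in B j -> i = j.
Proof.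
move=> dis vi vj; apply/eqP; apply: contraTT vj => ne.
by rewrite (disjointFr (dis i j ne) vi).
Qed.

Lemma mono_cycle_of_walk n (G : nat -> V) :
  (forall i j, i < n -> j < n -> G i = G j -> i = j) ->
  (forall i, i.+1 < n -> red (G i) (G i.+1)) -> red (G n.-1) (G 0) ->
  has_mono_cycle n c true.
Proof.
move=> Ginj Gstep Gwrap; exists (fun i : 'I_n => G i); split.
  by move=> i j /Ginj e; apply/val_inj/e.
move=> i; rewrite /= -/(red _ _); have lt_in := ltn_ord i.
case: (ltnP i.+1 n) => [lt_i1n|le_ni1]; first by rewrite modn_small // Gstep.
have -> : i.+1 %% n = 0 by rewrite (_ : i.+1 = n) ?modnn //; lia.
by rewrite (_ : nat_of_ord i = n.-1) //; lia.
Qed.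

Lemma mono_cycle_of_branches B1 B2 x a k u w :
  B1 0 = [set x] -> B2 0 = [set x] -> layered B1 -> layered B2 ->
  (forall i j, i != j -> [disjoint B1 i & B1 j]) ->
  (forall i j, i != j -> [disjoint B2 i & B2 j]) ->
  (forall i j, 0 < i -> 0 < j -> [disjoint B1 i & B2 j]) ->
  u \in B1 a -> w \in B2 k -> red u w -> 0 < k ->
  has_mono_cycle (a + k + 1) c true.
Proof.
move=> B10 B20 lay1 lay2 dis1 dis2 dis12 uB wB uw k_gt0.
have [f1 [f1a f1B f1r]] := layered_walk lay1 uB.
have [f2 [f2k f2B f2r]] := layered_walk lay2 wB.
have f10 : f1 0 = x by move: (f1B 0 isT); rewrite B10 inE => /eqP.
have f20 : f2 0 = x by move: (f2B 0 isT); rewrite B20 inE => /eqP.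
set n := a + k + 1.
(* Climb B1 from x to u, cross to w, and descend B2 back to x. *)
pose G i := if i <= a then f1 i else f2 (n - i).
have G1 i : i <= a -> G i \in B1 i by move=> le_ia; rewrite /G le_ia f1B.
have G2 i : a < i -> G i \in B2 (n - i).
  by move=> lt_ai; rewrite /G leqNgt lt_ai f2B //; lia.
apply: (@mono_cycle_of_walk n G) => [i j lt_in lt_jn eqG|i lt_i1n|].
- wlog le_ij : i j lt_in lt_jn eqG / i <= j.
    by move=> wl; case: (leqP i j) => [|/ltnW] h; [apply: wl | apply/esym/wl].
  case: (leqP j a) => [le_ja|lt_aj].
    have Gj := G1 j le_ja; rewrite -eqG in Gj.
    exact: disjoint_layers_eq dis1 (G1 i (leq_trans le_ij le_ja)) Gj.
  case: (leqP i a) => [le_ia|lt_ai].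
    have Gj := G2 j lt_aj; rewrite -eqG in Gj; exfalso.
    have [i0|i_gt0] := posnP i.
      have Gi0 : G i \in B2 0 by rewrite /G le_ia i0 f10 B20 inE.
      by have := disjoint_layers_eq dis2 Gi0 Gj; lia.
    by rewrite (disjointFr (dis12 i (n - j) i_gt0 _) (G1 i le_ia)) in Gj; lia.
  have Gj := G2 j lt_aj; rewrite -eqG in Gj.
  by have := disjoint_layers_eq dis2 (G2 i lt_ai) Gj; lia.
- rewrite /G; case: (ltngtP i a) => [lt_ia|lt_ai|->].
  + exact: f1r.
  + rewrite red_sym (_ : n - i = (n - i.+1).+1); last by lia.
    by apply: f2r; lia.
  + by rewrite f1a (_ : n - a.+1 = k) ?f2k //; lia.
- rewrite /G leqNgt (_ : a < n.-1) /=; last by lia.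
  by rewrite f10 -f20 red_sym (_ : n - n.-1 = 1) ?f2r //; lia.
Qed.

Definition stem (P : nat -> V) q (L : nat -> {set V}) j :=
  if j <= q then [set P j] else L (j - q).

Lemma stem_layered P q L : (forall j, j < q -> red (P j) (P j.+1)) ->
  L 0 = [set P q] -> layered L -> layered (stem P q L).
Proof.
move=> Pr L0 lay j v; rewrite /stem; case: (leqP j.+1 q) => [lt_jq|lt_qj].
  by rewrite (ltnW lt_jq) inE => /eqP ->; exists (P j); rewrite ?inE ?Pr.
rewrite subSn // => /lay[u uL uv]; exists u => //.
case: leqP uL => // le_jq; have -> : j = q by lia.
by rewrite subnn L0.
Qed.

Lemma stem_disjoint P q (L : nat -> {set V}) :
  (forall i j, i <= q -> j <= q -> P i = P j -> i = j) ->
  (forall i j, i != j -> [disjoint L i & L j]) ->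
  (forall i j, i <= q -> 0 < j -> P i \notin L j) ->
  forall i j, i != j -> [disjoint stem P q L i & stem P q L j].
Proof.
move=> Pinj disL PL i j ne; rewrite /stem.
case: (leqP i q) => iq; case: (leqP j q) => jq.
- by rewrite disjoints1 inE; apply: contra ne => /eqP/(Pinj _ _ iq jq) ->.
- by rewrite disjoints1 PL ?subn_gt0.
- by rewrite disjoint_sym disjoints1 PL ?subn_gt0.
- by apply: disL; apply: contra ne => /eqP e; apply/eqP; lia.
Qed.

Lemma stem_cross P q (L L' : nat -> {set V}) :
  (forall i j, 0 < i -> 0 < j -> [disjoint L' i & L j]) ->
  (forall i j, 0 < i -> j <= q -> P j \notin L' i) ->
  forall i j, 0 < i -> 0 < j -> [disjoint L' i & stem P q L j].
Proof.
move=> dis PL' i j i_gt0 j_gt0; rewrite /stem; case: leqP => jq.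
  by rewrite disjoint_sym disjoints1 PL'.
by apply: dis; rewrite ?subn_gt0.
Qed.

Definition expanding (K : {set V}) M := forall X, X \subset K -> 0 < #|X| < M ->
  8 * #|X| < #|nbhd X :&: K|.

Section Trees.
Variables (K : {set V}) (M : nat).
Hypothesis K_expanding : expanding K M.

Record tree (r : V) d k (L : nat -> {set V}) : Prop := Tree {
  tree_root : L 0 = [set r];
  tree_layered : layered L;
  tree_sub : forall j, 0 < j -> L j \subset K;
  tree_empty : forall j, k < j -> L j = set0;
  tree_card : forall j, j <= k -> j <= d -> #|L j| = 2 ^ j;
  tree_disjoint : forall i j, i != j -> [disjoint L i & L j] }.

Lemma tree0 r d : tree r d 0 (fun j => if j == 0 then [set r] else set0).
Proof.
split=> // [j v|j j_gt0|j j_gt0|j|i j ne].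
- by rewrite inE.
- by rewrite gtn_eqF // sub0set.
- by rewrite gtn_eqF.
- by rewrite leqn0 => /eqP -> _; rewrite cards1.
- case: eqP => [i0|_]; last by rewrite -setI_eq0 set0I.
  by rewrite i0 eq_sym in ne; rewrite (negbTE ne) -setI_eq0 setI0.
Qed.

Lemma tree_next_layer r d k L W :
  tree r d k L -> 8 <= #|nbhd [set r] :&: K| -> 2 ^ d < 2 * M ->
  #|W| <= 6 * 2 ^ k ->
  exists A : {set V}, [/\ A \subset nbhd (L k) :&: K,
               #|A| = (if k < d then 2 ^ k.+1 else 0) & [disjoint A & W]].
Proof.
move=> T deg_r small_d cardW; case: ifP => [lt_kd|_]; last first.
  by exists set0; rewrite sub0set cards0 -setI_eq0 set0I.
have cardLk : #|L k| = 2 ^ k := tree_card T (leqnn k) (ltnW lt_kd).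
have lt_kM : 2 ^ k < M.
  by have := leq_pexp2l (isT : 0 < 2) lt_kd; rewrite expnS; lia.
have big_nbhd : 8 * 2 ^ k <= #|nbhd (L k) :&: K|.
  have [k0|k_gt0] := posnP k; first by rewrite k0 (tree_root T) expn0.
  rewrite -cardLk ltnW // K_expanding ?(tree_sub T) // cardLk expn_gt0 /=.
  exact: lt_kM.
apply: exists_subset_card_disjoint; rewrite expnS; lia.
Qed.

Lemma tree_grow r d k L A : r \notin K -> tree r d k L ->
  A \subset nbhd (L k) :&: K -> #|A| = (if k < d then 2 ^ k.+1 else 0) ->
  (forall j, 0 < j -> [disjoint A & L j]) ->
  tree r d k.+1 (fun j => if j == k.+1 then A else L j).
Proof.
move=> rK T sA cardA disA; have [L0 lay sub emp card dis] := T.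
have sAK : A \subset K := subset_trans sA (subsetIr _ _).
split=> // [j v|j j_gt0|j lt_k1j|j le_jk1 le_jd|i j ne].
- case: eqP => [[->] vA|_ vL].
    have /setIP[/nbhdP[u uL uv] _] := subsetP sA v vA.
    by exists u; rewrite // ifN_eq // neq_ltn ltnSn.
  have [u uL uv] := lay j v vL; exists u => //.
  by case: eqP vL => [->|//]; rewrite emp ?inE.
- by case: eqP => // _; apply: sub.
- by rewrite gtn_eqF // emp // ltnW.
- case: eqP => [j_k1|ne]; first by rewrite cardA -j_k1 le_jd j_k1.
  by apply: card => //; rewrite -ltnS ltn_neqAle le_jk1 andbT; apply/eqP.
- have disAL j' : j' != k.+1 -> [disjoint A & L j'].
    have [-> _|j'_gt0 _] := posnP j'; last exact: disA.
    by rewrite L0 disjoint_sym disjoints1; apply: contra rK; apply: (subsetP sAK).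
  case: (eqVneq i k.+1) => [ei|ni]; case: (eqVneq j k.+1) => [ej|nj].
  + by rewrite ei ej eqxx in ne.
  + exact: disAL.
  + by rewrite disjoint_sym disAL.
  + exact: dis.
Qed.

Section Forest.
Variables (x y : V) (d1 d2 : nat).
Hypotheses (xK : x \notin K) (yK : y \notin K).
Hypotheses (deg_x : 8 <= #|nbhd [set x] :&: K|) (deg_y : 8 <= #|nbhd [set y] :&: K|).
Hypotheses (small_d1 : 2 ^ d1 < 2 * M) (small_d2 : 2 ^ d2 < 2 * M).

Record forest k (L1 L2 : nat -> {set V}) U : Prop := Forest {
  forest_tree1 : tree x d1 k L1;
  forest_tree2 : tree y d2 k L2;
  forest_cross : forall i j, 0 < i -> 0 < j -> [disjoint L1 i & L2 j];
  forest_used : forall j, 0 < j -> L1 j :|: L2 j \subset U;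
  forest_card_used : #|U| <= 4 * 2 ^ k }.

Lemma forest_grow k L1 L2 U : forest k L1 L2 U ->
  exists L1' L2' U', forest k.+1 L1' L2' U'.
Proof.
case=> T1 T2 cross used cardU.
have used1 j : 0 < j -> L1 j \subset U by move/used; rewrite subUset => /andP[].
have used2 j : 0 < j -> L2 j \subset U by move/used; rewrite subUset => /andP[].
have cardU6 : #|U| <= 6 * 2 ^ k by lia.
have [A1 [sA1 cardA1 disA1]] := tree_next_layer T1 deg_x small_d1 cardU6.
have leA1 : #|A1| <= 2 * 2 ^ k by rewrite cardA1 expnS; case: ifP.
have cardUA1 : #|U :|: A1| <= 6 * 2 ^ k by apply: leq_trans (leq_card_setU _ _) _; lia.
have [A2 [sA2 cardA2 disA2]] := tree_next_layer T2 deg_y small_d2 cardUA1.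
have leA2 : #|A2| <= 2 * 2 ^ k by rewrite cardA2 expnS; case: ifP.
have disA2U : [disjoint A2 & U] by apply: disjointWr disA2; apply: subsetUl.
have disA2A1 : [disjoint A2 & A1] by apply: disjointWr disA2; apply: subsetUr.
exists (fun j => if j == k.+1 then A1 else L1 j),
       (fun j => if j == k.+1 then A2 else L2 j), (U :|: A1 :|: A2).
split=> [||i j i_gt0 j_gt0|j j_gt0|].
- apply: tree_grow xK T1 sA1 cardA1 _ => j j_gt0.
  exact: disjointWr (used1 j j_gt0) disA1.
- apply: tree_grow yK T2 sA2 cardA2 _ => j j_gt0.
  exact: disjointWr (used2 j j_gt0) disA2U.
- case: eqP => _; case: eqP => _.
  + by rewrite disjoint_sym.
  + exact: disjointWr (used2 j j_gt0) disA1.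
  + by rewrite disjoint_sym; apply: disjointWr (used1 i i_gt0) disA2U.
  + exact: cross.
- case: eqP => _; first by rewrite -setUA subsetUr.
  by apply: subset_trans (used j j_gt0) _; rewrite -setUA subsetUl.
- apply: leq_trans (leq_card_setU _ _) _.
  by have := leq_card_setU U A1; rewrite expnS; lia.
Qed.

Lemma forest_exists k : exists L1 L2 U, forest k L1 L2 U.
Proof.
elim: k => [|k [L1 [L2 [U F]]]]; last exact: forest_grow F.
exists (fun j => if j == 0 then [set x] else set0),
       (fun j => if j == 0 then [set y] else set0), set0.
split=> [||i j i_gt0 j_gt0|j j_gt0|]; rewrite ?gtn_eqF ?cards0 ?setU0 ?sub0set //.
- exact: tree0.
- exact: tree0.
- by rewrite -setI_eq0 set0I.
Qed.
End Forest.
End Trees.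

Lemma red_across_of_no_mono_Kab m1 m2 : ~ has_mono_Kab m1 m2 c false ->
  forall X Y, opposite X Y -> m1 <= #|X| -> m2 <= #|Y| ->
  exists x y, [/\ x \in X, y \in Y & red x y].
Proof.
move=> noK X Y XY h1 h2.
case: (boolP [exists x in X, exists y in Y, red x y]).
  by case/exists_inP=> x xX /exists_inP[y yY xy]; exists x, y.
move=> none; case: noK; apply: mono_Kab_of_red_free XY h1 h2 _ => x y xX yY.
by apply: contra none => xy; apply/exists_inP; exists x => //; apply/exists_inP; exists y.
Qed.

Section RedAcross.
Variables m1 m2 : nat.
Hypothesis red_across : forall X Y, opposite X Y -> m1 <= #|X| -> m2 <= #|Y| ->
  exists x y, [/\ x \in X, y \in Y & red x y].
Local Notation M := (maxn m1 m2).

Lemma red_free_small X Y : opposite X Y ->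
  (forall x y, x \in X -> y \in Y -> ~~ red x y) -> #|X| < M \/ #|Y| < M.
Proof.
move=> XY free; case: (ltnP #|X| M) => [|MX]; [by left | right].
rewrite ltnNge; apply/negP=> MY.
have [x [y [xX yY xy]]] :=
  red_across XY (leq_trans (leq_maxl _ _) MX) (leq_trans (leq_maxr _ _) MY).
by move: (free x y xX yY); rewrite xy.
Qed.

Lemma nbhd_coside_small s X : X \subset side s -> M <= #|X| ->
  #|side (~~ s) :\: nbhd X| < M.
Proof.
move=> sX MX; have XY : opposite X (side (~~ s) :\: nbhd X).
  by exists s; rewrite sX subsetDl.
have free x y : x \in X -> y \in side (~~ s) :\: nbhd X -> ~~ red x y.
  by move=> xX /setDP[_]; apply: contra => xy; apply/nbhdP; exists x.
by case: (red_free_small XY free) => //; rewrite ltnNge MX.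
Qed.

Lemma card_nbhd_large C w Z : (forall s, #|side s :\: C| <= w) ->
  2 * M <= #|Z|.+1 -> b < #|nbhd Z :&: C| + w + M.
Proof.
move=> wC MZ.
have [s MZs] : exists s, M <= #|Z :&: side s|.
  case: (leqP M #|Z :&: side true|) => [|lt_ZM]; first by exists true.
  exists false; have := cardsID (side true) Z; rewrite setDE setC_side /=; card_lia.
have cover : side (~~ s) \subset
    (side (~~ s) :\: nbhd (Z :&: side s)) :|: (side (~~ s) :\: C) :|: (nbhd Z :&: C).
  apply/subsetP=> v vs; rewrite !in_setU !in_setD !in_setI vs /=.
  case: (boolP (v \in nbhd (Z :&: side s))) => //= vN.
  by rewrite (subsetP (nbhdS (subsetIl Z _)) v vN); case: (v \in C).
have := leq_card_subsetU cover; rewrite card_side.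
have := leq_card_setU (side (~~ s) :\: nbhd (Z :&: side s)) (side (~~ s) :\: C) : _ <= _.
have := nbhd_coside_small (subsetIr Z (side s)) MZs; have := wC (~~ s); lia.
Qed.

Lemma expanding_subset C w : (forall s, #|side s :\: C| <= w) -> 0 < M ->
  25 * M + w <= b ->
  exists K, [/\ K \subset C, #|C :\: K| < 18 * M & expanding K M].
Proof.
move=> wC M_gt0 large_b.
pose sparse Z := [&& Z \subset C, #|nbhd Z :&: C| <= 8 * #|Z| & #|Z| + 3 <= 3 * M].
have sparse0 : sparse set0 by rewrite /sparse sub0set nbhd0 set0I !cards0 /=; lia.
have [Z sparseZ maxZ] := @arg_maxnP _ set0 sparse (fun Z => #|Z|) sparse0.
case/and3P: sparseZ => sZC degZ cardZ.
have smallZ : #|Z|.+2 <= 2 * M.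
  rewrite leqNgt; apply/negP => bigZ.
  by have := card_nbhd_large wC bigZ; lia.
exists (C :\: (Z :|: nbhd Z)); split=> [|/=|X sX /andP[X_gt0 XM]].
- exact: subsetDl.
- have cover : C :\: (C :\: (Z :|: nbhd Z)) \subset Z :|: (nbhd Z :&: C).
    apply/subsetP=> v; rewrite !(in_setD, in_setU, in_setI).
    by case: (v \in Z); case: (v \in C); case: (v \in nbhd Z).
  by have := leq_card_subsetU cover; card_lia.
- have disZX : [disjoint Z & X].
    apply: disjointWr sX _; rewrite disjoint_subset.
    by apply/subsetP=> v; rewrite !inE => ->.
  have cardZX : #|Z :|: X| = #|Z| + #|X| by rewrite cardsU disjoint_setI0 ?cards0 ?subn0.
  (* Maximality makes Z :|: X dense, and Z accounts for at most 8 #|Z| of it. *)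
  have dense : 8 * (#|Z| + #|X|) < #|nbhd (Z :|: X) :&: C|.
    have : ~~ sparse (Z :|: X) by apply/negP=> /maxZ; rewrite cardZX; lia.
    rewrite /sparse subUset sZC (subset_trans sX (subsetDl _ _)) cardZX /=.
    by rewrite negb_and -!ltnNge => /orP[//|]; card_lia.
  have cover : nbhd (Z :|: X) :&: C \subset
      (nbhd Z :&: C) :|: (nbhd X :&: (C :\: (Z :|: nbhd Z))).
    apply/subsetP=> v; rewrite nbhdU !(in_setI, in_setU, in_setD).
    case/andP=> /orP[vN|vN] vC; rewrite vC ?vN //=.
    case: (boolP (v \in nbhd Z)) => //= vNZ; rewrite orbF andbT.
    apply/negP=> vZ; case/nbhdP: vN => u uX uv.
    have : u \in nbhd Z by apply/nbhdP; exists v; rewrite // red_sym.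
    by move: (subsetP sX u uX); rewrite !(in_setD, in_setU) => /andP[/norP[_ /negbTE ->]].
  by have := leq_card_subsetU cover; card_lia.
Qed.

Lemma low_degree_small s X K : X \subset side s ->
  (forall v, v \in X -> #|nbhd [set v] :&: K| < 8) ->
  #|side (~~ s) :\: K| + 8 * M <= b -> #|X| < M.
Proof.
move=> sX lowdeg large_b; rewrite ltnNge; apply/negP=> /exists_subset_card[Y sYX cardY].
have small := nbhd_coside_small (subset_trans sYX sX) (eq_leq (esym cardY)).
have degY : #|nbhd Y :&: K| <= 7 * #|Y|.
  by apply: card_nbhd_le => v /(subsetP sYX)/lowdeg.
have cover : side (~~ s) \subset
    (side (~~ s) :\: nbhd Y) :|: (side (~~ s) :\: K) :|: (nbhd Y :&: K).
  apply/subsetP=> v vs; rewrite !in_setU !in_setD !in_setI vs /=.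
  by case: (v \in nbhd Y); case: (v \in K).
have := leq_card_subsetU cover; rewrite card_side.
have := leq_card_setU (side (~~ s) :\: nbhd Y) (side (~~ s) :\: K) : _ <= _.
card_lia.
Qed.

(* Depth-first search: S holds finished vertices, T untouched ones, and the
   stack p (top first) is a red path. *)
Record dfs_state D S T p : Prop := DfsState {
  dfs_cover : forall v, (v \in D) = [|| v \in S, v \in T | v \in p];
  dfs_disjoint : [disjoint S & T];
  dfs_stack : forall v, v \in p -> (v \notin S) && (v \notin T);
  dfs_uniq : uniq p;
  dfs_sorted : sorted red p;
  dfs_red_free : forall s t, s \in S -> t \in T -> ~~ red s t }.

Lemma dfs_push D S T p t : dfs_state D S T p -> t \in T ->
  sorted red (t :: p) -> dfs_state D S (T :\ t) (t :: p).
Proof.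
case=> cover disST stack puniq _ free tT tp; split=> //.
- by move=> v; rewrite cover in_setD1 inE; case: eqVneq => [->|]; rewrite ?tT ?orbT.
- exact: disjointWr (subsetDl _ _) disST.
- move=> v; rewrite inE in_setD1 => /orP[/eqP->|/stack/andP[-> /negbTE->]].
    by rewrite eqxx (disjointFl disST tT).
  by rewrite andbF.
- rewrite /= puniq andbT; apply: contraL tT => /stack/andP[_].
  by apply: contraNN.
- by move=> s v sS /setD1P[_ vT]; apply: free.
Qed.

Lemma dfs_pop D S T u p : dfs_state D S T (u :: p) ->
  (forall t, t \in T -> ~~ red u t) -> dfs_state D (u |: S) T p.
Proof.
case=> cover disST stack /andP[up puniq] sortedp free uT.
have /andP[uS uT'] := stack u (mem_head u p).
split=> //.
- by move=> v; rewrite cover in_setU1 inE; case: (v == u); rewrite ?orbT.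
- by rewrite -setI_eq0 setIUl (disjoint_setI0 disST) setU0 setI_eq0 disjoints1.
- move=> v vp; rewrite in_setU1 negb_or.
  have /andP[-> ->] : (v \notin S) && (v \notin T) by apply: stack; rewrite inE vp orbT.
  rewrite !andbT.
  by apply: contraNneq up => <-.
- exact: path_sorted sortedp.
- move=> s t /setU1P[->|sS] tT; [exact: uT | exact: free].
Qed.

Lemma dfs_step D S T p : dfs_state D S T p -> #|S| < #|D| ->
  exists S' T' p', dfs_state D S' T' p' /\ #|S'| = #|S|.+1.
Proof.
have [n] := ubnP #|T|; elim: n T p => // n IH T p /ltnSE cardT st ltSD.
have push t : t \in T -> sorted red (t :: p) -> exists S' T' p',
    dfs_state D S' T' p' /\ #|S'| = #|S|.+1.
  move=> tT tp; apply: (IH _ _ _ (dfs_push st tT tp) ltSD).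
  by move: cardT; rewrite (cardsD1 t T) tT.
case: p st push => [|u p] st push.
  have [T0|[t tT]] := set_0Vmem T; last exact: push t tT isT.
  suff : D \subset S by move/subset_leq_card; rewrite leqNgt ltSD.
  by apply/subsetP=> v; rewrite (dfs_cover st) T0 in_set0 orbF.
case: (boolP [exists t in T, red u t]) => [/exists_inP[t tT ut]|/exists_inP free].
  by apply: (push t tT); rewrite /= red_sym ut; apply: (dfs_sorted st).
exists (u |: S), T, p; split.
  by apply: dfs_pop st _ => t tT; apply/negP=> ut; apply: free; exists t.
by rewrite cardsU1 (andP (dfs_stack st (mem_head u p))).1.
Qed.

Lemma dfs_reach D s : s <= #|D| -> exists S T p, dfs_state D S T p /\ #|S| = s.
Proof.
elim: s => [_|s IH lt_sD].
  exists set0, D, [::]; split; last exact: cards0.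
  split=> [v|||||s t]; rewrite ?in_set0 ?orbF //.
  by rewrite -setI_eq0 set0I.
have [S [T [p [st cardS]]]] := IH (ltnW lt_sD).
have ltSD : #|S| < #|D| by rewrite cardS.
have [S' [T' [p' [st' cardS']]]] := dfs_step st ltSD.
by exists S', T', p'; rewrite cardS' cardS.
Qed.

Lemma long_red_path D g q : 0 < M -> (forall s, g <= #|D :&: side s|) ->
  2 * M + q <= g + 1 ->
  exists P : nat -> V, [/\ forall j, j <= q -> P j \in D,
    forall i j, i <= q -> j <= q -> P i = P j -> i = j &
    forall j, j < q -> red (P j) (P j.+1)].
Proof.
move=> M_gt0 gD gMq.
have [S [T [p [st cardS]]]] : exists S T p, dfs_state D S T p /\ #|S| = (2 * M).-1.
  apply: dfs_reach; have := gD true; have := subset_leq_card (subsetIl D (side true)).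
  card_lia.
have long_p : q < size p.
  have split_D s : #|D :&: side s| <= #|S :&: side s| + #|T :&: side s| + size p.
    have cover : D :&: side s \subset (S :&: side s) :|: (T :&: side s) :|: [set v in p].
      apply/subsetP=> v /setIP[]; rewrite (dfs_cover st) !inE.
      by case/or3P=> -> ->; rewrite ?orbT.
    have := leq_card_subsetU cover.
    have := leq_card_setU (S :&: side s) (T :&: side s) : _ <= _.
    have : #|[set v in p]| <= size p by rewrite cardsE card_size.
    card_lia.
  have parts s : #|S :&: side s| < M \/ #|T :&: side (~~ s)| < M.
    apply: red_free_small; first by exists s; rewrite !subsetIr.
    by move=> x y /setIP[xS _] /setIP[yT _]; apply: (dfs_red_free st).
  have := cardsID (side true) S; rewrite setDE setC_side.
  have := parts true; have := parts false; have := split_D true; have := split_D false.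
  have := gD true; have := gD false; rewrite /=; card_lia.
case: p st long_p => [//|x p] st /= long_p.
exists (nth x (x :: p)); split=> [j le_jq|i j le_iq le_jq|j lt_jq].
- by rewrite (dfs_cover st) mem_nth ?orbT //=; lia.
- by move/eqP; rewrite nth_uniq ?(dfs_uniq st) //= => [/eqP||]; lia.
- by have /= /(pathP x) /(_ j) := dfs_sorted st; apply; lia.
Qed.

Lemma mono_cycle_of_path K P q : 0 < m1 -> 1 < m2 -> expanding K M ->
  (forall j, j <= q -> P j \notin K) ->
  (forall i j, i <= q -> j <= q -> P i = P j -> i = j) ->
  (forall j, j < q -> red (P j) (P j.+1)) ->
  8 <= #|nbhd [set P 0] :&: K| -> 8 <= #|nbhd [set P q] :&: K| ->
  odd (up_log 2 m1) != odd (q + up_log 2 m2) ->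
  has_mono_cycle (up_log 2 m1 + (q + up_log 2 m2) + 1) c true.
Proof.
move=> m1_gt0 m2_gt1 K_exp PK Pinj Pred deg0 degq parity.
set d1 := up_log 2 m1; set d2 := up_log 2 m2.
have d2_gt0 : 0 < d2 by rewrite up_log_gt0 m2_gt1.
have small m : 0 < m -> m <= M -> 2 ^ up_log 2 m < 2 * M.
  by move=> m_gt0 le_mM; have := up_log2_lt_double m_gt0; lia.
have [L1 [L2 [U [T1 T2 cross _ _]]]] :=
  forest_exists K_exp (PK 0 isT) (PK q (leqnn q)) deg0 degq
    (small m1 m1_gt0 (leq_maxl _ _)) (small m2 (ltnW m2_gt1) (leq_maxr _ _)) (d1 + d2).
have stem0 : stem P q L2 0 = [set P 0] by [].
have stem_end : stem P q L2 (q + d2) = L2 d2.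
  by rewrite /stem addKn leqNgt -{1}(addn0 q) ltn_add2l d2_gt0.
have lay2 := stem_layered Pred (tree_root T2) (tree_layered T2).
have opp : opposite (L1 d1) (L2 d2).
  rewrite -stem_end; apply: layers_opposite (tree_root T1) stem0 (tree_layered T1) lay2 _.
  by move: parity; case: odd; case: odd.
have big1 : m1 <= #|L1 d1| by rewrite (tree_card T1) ?leq_addr // up_logP.
have big2 : m2 <= #|L2 d2| by rewrite (tree_card T2) ?leq_addl // up_logP.
have [u [w [uL wL uw]]] := red_across opp big1 big2.
rewrite -stem_end in wL.
apply: mono_cycle_of_branches (tree_root T1) stem0 (tree_layered T1) lay2
    (tree_disjoint T1) _ _ uL wL uw _; last by rewrite addn_gt0 d2_gt0 orbT.
- apply: stem_disjoint Pinj (tree_disjoint T2) _ => i j le_iq j_gt0.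
  by apply: contra (PK i le_iq); apply: (subsetP (tree_sub T2 j_gt0)).
- apply: stem_cross cross _ => i j i_gt0 le_jq.
  by apply: contra (PK j le_jq); apply: (subsetP (tree_sub T1 i_gt0)).
Qed.

Lemma many_high_degree W K s : #|W :&: side s| = 4 * M ->
  #|side (~~ s) :\: K| + 8 * M <= b ->
  3 * M + 1 <= #|[set v in W | 8 <= #|nbhd [set v] :&: K|] :&: side s|.
Proof.
move=> cardW large_b; set D := [set v in W | _].
have low_small : #|(W :&: side s) :\: D| < M.
  apply: (low_degree_small (s := s) (K := K)) large_b.
    exact: subset_trans (subsetDl _ _) (subsetIr _ _).
  by move=> v /setDP[/setIP[vW _]]; rewrite inE vW /= -ltnNge.
have high : W :&: side s :&: D \subset D :&: side s.
  by apply/subsetP=> v; rewrite !in_setI => /andP[/andP[_ ->] ->].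
have := subset_leq_card high; have := cardsID D (W :&: side s).
by rewrite cardW; card_lia.
Qed.

Lemma mono_cycle n : 0 < m1 -> ~~ odd n -> up_log 2 m1 + up_log 2 m2 + 1 <= n ->
  n <= m2 -> 32 * M <= b -> has_mono_cycle n c true.
Proof.
move=> m1_gt0 n_even n_large n_le_m2 b_large.
have m2_gt1 : 1 < m2 by case: n n_even n_large n_le_m2 => [|[|n]] //; lia.
set d1 := up_log 2 m1; set d2 := up_log 2 m2; set q := n - (d1 + d2 + 1).
have M_gt0 : 0 < M by have := leq_maxl m1 m2; lia.
have [W cardW] : exists W, forall s, #|W :&: side s| = 4 * M.
  by apply: exists_balanced; lia.
have wC s : #|side s :\: ~: W| <= 4 * M by rewrite setDE setCK setIC cardW.
have [K [sK cardK K_exp]] := expanding_subset wC M_gt0 (ltac:(lia) : 25 * M + 4 * M <= b).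
pose D := [set v in W | 8 <= #|nbhd [set v] :&: K|].
have K_large s : #|side s :\: K| + 8 * M <= b.
  have cover : side s :\: K \subset (side s :\: ~: W) :|: (~: W :\: K).
    apply/subsetP=> v; rewrite !inE.
    by case: (v \in W); case: (v \in K); case: (is_left v == s).
  by have := leq_card_subsetU cover; have := wC s; card_lia.
have D_large s : 3 * M + 1 <= #|D :&: side s| := many_high_degree (cardW s) (K_large _).
have [P [PD Pinj Pred]] :=
  long_red_path M_gt0 D_large (ltac:(lia) : 2 * M + q <= 3 * M + 1 + 1).
have PK j : j <= q -> P j \notin K.
  move/PD; rewrite inE => /andP[PW _]; apply: contraL PW => /(subsetP sK).
  by rewrite inE.
have deg j : j <= q -> 8 <= #|nbhd [set P j] :&: K| by move/PD; rewrite inE => /andP[].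
have en : n = d1 + (q + d2) + 1 by lia.
rewrite en; apply: mono_cycle_of_path m1_gt0 m2_gt1 K_exp PK Pinj Pred
  (deg 0 isT) (deg q (leqnn q)) _.
by move: n_even; rewrite en addn1 /= negbK oddD; case: odd; case: odd.
Qed.
End RedAcross.
End Coloring.

Theorem lemma2p4 (m1 m2 n : nat) :
  0 < m1 -> 0 < m2 -> ~~ odd n ->
  up_log 2 m1 + up_log 2 m2 + 1 <= n -> n <= m2 ->
  BR_le n m1 m2 (32 * m1 + 49 * m2).
Proof.
move=> m1_gt0 _ n_even n_large n_le_m2; exists (32 * m1 + 49 * m2); split=> // c.
have [Kab|noKab] := classic (has_mono_Kab m1 m2 c false); [by right | left].
apply: mono_cycle (red_across_of_no_mono_Kab noKab) _ _ _ _ _ _ => //.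
lia.
Qed.
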